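(* Let $p$ be a prime number, $J$ a positive integer, and $G$ a finite group. Let $\tilde A$ be a normal subgroup of $G$ of index at most $J$, and suppose $\tilde A$ is abelian (respectively, nilpotent of class at most $c$). Then $G$ contains a normal subgroup $A$ such that the minimal number of generators of $A$ does not exceed that of $\tilde A$, the order of $A$ is coprime to $p$, the index of $A$ in $G$ is at most $J\cdot|G_p|$ where $G_p$ is a $p$-Sylow subgroup of $G$, and $A$ is abelian (respectively, nilpotent of class at most $c$).
   Context: A group is nilpotent of class at most $c$ if its upper central series has length at most $c$. *)

From mathcomp Require Import all_boot all_fingroup all_solvable.
Set Implicit Arguments.
Unset Strict Implicit.
Unset Printing Implicit Defensive.
Open Scope group_scope.

(* Minimal number of generators d(G) of a finite group G:
   the least #|X| over all subsets X with <<X>> = G (X = G is such a set,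
   so the default value #|G| of the min is never strictly attained beyond it). *)
Definition ngen (gT : finGroupType) (G : {group gT}) : nat :=
  \big[minn/#|G|]_(X : {set gT} | <<X>> == G) #|X|.

From mathcomp Require Import all_boot all_order all_fingroup all_solvable.
Import Order.TTheory.
Open Scope group_scope.

(* Take A = O_p'(At). As At is nilpotent, At = O_p(At) x A, so A is a
   homomorphic image of At (hence needs no more generators), A is a
   p'-group, |At : A| = |O_p(At)| is at most the order of a Sylow
   p-subgroup of G, and A inherits every subgroup-closed property of At. *)

Lemma ngen_min (gT : finGroupType) (G : {group gT}) (X : {set gT}) :
  <<X>> = G -> ngen G <= #|X|.
Proof.
move=> genX; have := @bigmin_le_cond _ nat _ #|G| X (fun Y => <<Y>> == G).
by rewrite minEnat genX eqxx; apply.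
Qed.

Lemma ngenP (gT : finGroupType) (G : {group gT}) m :
  (forall X : {set gT}, <<X>> = G -> m <= #|X|) -> m <= ngen G.
Proof.
move=> leX; apply: (big_ind (leq m)) => [|a b ma mb | X /eqP/leX //].
  exact/leX/genGid.
by rewrite leq_min ma mb.
Qed.

Lemma ngen_morphim (aT rT : finGroupType) (D : {group aT})
    (f : {morphism D >-> rT}) (H : {group aT}) :
  H \subset D -> ngen (f @* H)%G <= ngen H.
Proof.
move=> sHD; apply: ngenP => X genX; apply: leq_trans (leq_morphim f X).
have sXD : X \subset D by rewrite (subset_trans _ sHD) // -genX subset_gen.
by apply: ngen_min; rewrite -morphim_gen ?genX.
Qed.

Lemma ngen_sdprodr (gT : finGroupType) (K H G : {group gT}) :
  K ><| H = G -> ngen H <= ngen G.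
Proof.
move=> defG; have [nKG sHG defKH _ tiKH] := sdprod_context defG.
have complH : H \in [complements to K in G] by apply/complP.
have remM : morphic G (remgr K H) by apply/morphicP; apply: remgrM.
suff <- : (morphm_morphism remM @* G)%G = H by apply: ngen_morphim.
apply/val_inj/setP=> y /=; rewrite morphimEdom.
apply/imsetP/idP=> [[x Gx ->] | Hy]; first by rewrite mem_remgr ?defKH.
by exists y; [apply: subsetP Hy | exact/esym/remgr_id].
Qed.

Lemma card_pgroup_le_Syl (gT : finGroupType) (p : nat) (G P K : {group gT}) :
  p.-Sylow(G) P -> K \subset G -> p.-group K -> #|K| <= #|P|.
Proof.
move=> sylP sKG pK; have [x _ /subset_leq_card] := Sylow_subJ sylP sKG pK.
by rewrite cardJg.
Qed.

Lemma ucn_idS (gT : finGroupType) (c : nat) (G H : {group gT}) :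
  H \subset G -> 'Z_c(G) = G -> 'Z_c(H) = H.
Proof.
move=> sHG /eqP; rewrite -ucn_lcnP -!subG1 => LG1.
by apply/eqP; rewrite -ucn_lcnP -subG1 (subset_trans (lcnS _ sHG)).
Qed.

Section NilpotentNormalSubgroup.

Context {gT : finGroupType} {p : nat} {G H : {group gT}}.
Hypotheses (nHG : H <| G) (nilH : nilpotent H).

Let dprodH : 'O_p(H) \x 'O_p^'(H) = H := nilpotent_pcoreC p nilH.

Lemma ngen_p'core : ngen 'O_p^'(H)%G <= ngen H.
Proof. exact: ngen_sdprodr (dprodWsd dprodH). Qed.

Lemma index_p'core_le_Syl (P : {group gT}) :
  p.-Sylow(G) P -> #|G : 'O_p^'(H)| <= #|G : H| * #|P|.
Proof.
move=> sylP; rewrite -(Lagrange_index (normal_sub nHG) (pcore_sub _ _)).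
rewrite leq_mul // -(index_sdprod (dprodWsdC dprodH)).
apply: card_pgroup_le_Syl sylP _ (pcore_pgroup _ _).
exact: gFsub_trans (normal_sub nHG).
Qed.

End NilpotentNormalSubgroup.

Theorem lemma2p5 (gT : finGroupType) (G At : {group gT}) (p J : nat) :
  prime p -> 0 < J -> At <| G -> #|G : At| <= J ->
  (abelian At ->
     exists A : {group gT},
       [/\ A <| G, ngen A <= ngen At, coprime #|A| p,
           (forall P : {group gT}, P \in 'Syl_p(G) -> #|G : A| <= J * #|P|)
         & abelian A])
  /\
  (forall c : nat, 'Z_c(At) = At ->
     exists A : {group gT},
       [/\ A <| G, ngen A <= ngen At, coprime #|A| p,
           (forall P : {group gT}, P \in 'Syl_p(G) -> #|G : A| <= J * #|P|)
         & 'Z_c(A) = A]).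
Proof.
move=> pr_p _ nAtG leJ; pose A := 'O_p^'(At)%G.
have sAAt : A \subset At := pcore_sub _ _.
have propsA : nilpotent At ->
    [/\ A <| G, ngen A <= ngen At, coprime #|A| p
      & forall P : {group gT}, P \in 'Syl_p(G) -> #|G : A| <= J * #|P|].
  move=> nilAt; split.
  - exact: gFnormal_trans.
  - exact: ngen_p'core.
  - exact: p'nat_coprime (pcore_pgroup _ _) (pnat_id pr_p).
  move=> P; rewrite inE => sylP.
  by rewrite (leq_trans (index_p'core_le_Syl nAtG nilAt P sylP)) ?leq_mul.
split=> [abAt | c ZcAt].
  have [? ? ? ?] := propsA (abelian_nil abAt).
  by exists A; split=> //; apply: abelianS abAt.
have nilAt : nilpotent At by apply/ucnP; exists c.
have [? ? ? ?] := propsA nilAt.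
by exists A; split=> //; apply: ucn_idS ZcAt.
Qed.
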